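(* Let $q=3^{2n+1}$ and $q=q_0^r$ with $r\neq3$ an odd prime. Then for any subfield $\mathbb{F}_{q_1}$ of $\mathbb{F}_q$ there exists $\lambda\in\mathbb{F}_{q_0}$ such that $\mathrm{Tr}_{\mathbb{F}_q/\mathbb{F}_{q_1}}(\lambda)\in\mathbb{F}_{q_1}^\times$. In particular there exists $\lambda_1\in\mathbb{F}_{q_0}$ such that $\mathrm{Tr}_{\mathbb{F}_q/\mathbb{F}_{q_1}}(\lambda_1)=1$.
   Context: For $q=q_1^k$, $\mathrm{Tr}_{\mathbb{F}_q/\mathbb{F}_{q_1}}(x)=x+x^{q_1}+\dots+x^{q_1^{k-1}}$. *)

From mathcomp Require Import all_boot all_algebra all_field.
Set Implicit Arguments. Unset Strict Implicit. Unset Printing Implicit Defensive.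
Import GRing.Theory.
Local Open Scope ring_scope.

Definition in_subfield (F : finFieldType) (q' : nat) (x : F) : bool :=
  x ^+ q' == x.

(* Tr_{F_q/F_{q1}}(x) = x + x^{q1} + ... + x^{q1^(k-1)}  where q = q1^k. *)
Definition trace (F : finFieldType) (q1 k : nat) (x : F) : F :=
  \sum_(i < k) x ^+ (q1 ^ i).

(** Every trace [Tr_{F_q/F_q1}(x)] lies in [F_q1], so only nonvanishing is at
    stake, and [lambda1] is then [lambda] divided by its trace.  Write
    [q = 3^N], [q0 = 3^m], [q1 = 3^j] with [m r = N = j k], and take
    [lambda = Tr_{F_q/F_q0}(y)].  If [j] divides [m], then
    [Tr_{F_q/F_q1}(lambda) = r Tr_{F_q/F_q1}(y)], as [lambda] is a sum of [r]
    conjugates of [y].  Otherwise the primality of [r] forces [j = g r] and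
    [m = g k] with [k] and [r] coprime, and then
    [Tr_{F_q/F_q1}(lambda) = Tr_{F_q/F_{3^g}}(y)], because [r i + k s] runs
    over all residues modulo [r k].  As [r <> 3] and a trace is a nonzero
    polynomial of degree less than [q], a suitable [y] works in both cases. *)

From mathcomp Require Import all_boot all_algebra all_field.
Set Implicit Arguments. Unset Strict Implicit. Unset Printing Implicit Defensive.
Import GRing.Theory.

Lemma pfactor_root p N q r : prime p -> 0 < N ->
  p ^ N = q ^ r -> exists2 m, q = p ^ m & m * r = N.
Proof.
move=> p_pr N_gt0 pNqr; have p_gt1 := prime_gt1 p_pr.
have r_gt0 : 0 < r.
  rewrite lt0n; apply: contraTneq N_gt0 => r0.
  by move: pNqr; rewrite r0 expn0 -(expn0 p) => /eqP; rewrite eqn_exp2l // => /eqP ->.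
have /(dvdn_pfactor _ _ p_pr) [m _ qE] : q %| p ^ N by rewrite pNqr dvdn_exp.
by exists m => //; apply/eqP; rewrite -(eqn_exp2l _ _ p_gt1) expnM -qE pNqr.
Qed.

Lemma prime_cofactor_split j k m r : prime r -> j * k = m * r ->
  ~~ (j %| m) -> exists g, [/\ j = g * r, m = g * k & coprime k r].
Proof.
move=> r_pr jkmr j_ndvd_m; have r_gt0 := prime_gt0 r_pr.
have r_cop_k : coprime r k.
  rewrite prime_coprime //; apply: contra j_ndvd_m => /dvdnP [k' kE].
  apply/dvdnP; exists k'; apply/eqP; rewrite -(eqn_pmul2r r_gt0) -jkmr kE.
  by rewrite mulnCA mulnA.
have /dvdnP [g jE] : r %| j by rewrite -(Gauss_dvdl j r_cop_k) jkmr dvdn_mull.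
exists g; split=> //; last by rewrite coprime_sym.
by apply/eqP; rewrite -(eqn_pmul2r r_gt0) -jkmr jE mulnAC.
Qed.

Lemma eqn_mod_coprime_mul2l a d m n : coprime a d ->
  (a * m == a * n %[mod d]) = (m == n %[mod d]).
Proof.
move=> a_cop_d; wlog le_nm : m n / n <= m.
  by move=> wlog; case: (leqP n m) => [|/ltnW] /wlog // ; rewrite eq_sym [RHS]eq_sym.
rewrite !eqn_mod_dvd ?leq_mul2l ?le_nm ?orbT // -mulnBr Gauss_dvdr //.
by rewrite coprime_sym.
Qed.

Local Open Scope ring_scope.

Section FiniteFieldTrace.

Variable F : finFieldType.
Implicit Types (x y c : F) (q k a b d e : nat).

Lemma expr_pchar_sum q (I : Type) (s : seq I) (P : pred I) (f : I -> F) :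
  [pchar F].-nat q -> (\sum_(i <- s | P i) f i) ^+ q = \sum_(i <- s | P i) f i ^+ q.
Proof.
move=> q_pchar; have /andP [q_gt0 _] := q_pchar.
apply: (big_morph (fun x : F => x ^+ q)); first by move=> x y; exact: exprDn_pchar.
by rewrite expr0n gtn_eqF.
Qed.

Lemma pchar_natX q e : [pchar F].-nat q -> [pchar F].-nat (q ^ e)%N.
Proof. by rewrite pnatX => ->. Qed.

Lemma pchar_nat_expn p e : p \in [pchar F] -> [pchar F].-nat (p ^ e)%N.
Proof. by move=> charFp; rewrite pnatX pnatE ?charFp ?(pcharf_prime charFp). Qed.

Lemma fixed_exprX q e x : x ^+ q = x -> x ^+ (q ^ e)%N = x.
Proof.
by move=> xq; elim: e => [|e IHe]; rewrite ?expr1 // expnSr exprM IHe xq.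
Qed.

Lemma fixed_expr_modn q d e x :
  x ^+ (q ^ d)%N = x -> x ^+ (q ^ e)%N = x ^+ (q ^ (e %% d))%N.
Proof.
move=> xqd; rewrite {1}(divn_eq e d) expnD (mulnC (e %/ d)%N) expnM exprM.
by rewrite (fixed_exprX _ xqd).
Qed.

Lemma trace_expr q k P x : [pchar F].-nat P ->
  trace q k x ^+ P = trace q k (x ^+ P).
Proof.
by move=> P_pchar; rewrite /trace expr_pchar_sum //; apply: eq_bigr => i _; rewrite exprAC.
Qed.

Lemma trace_sum q k (I : Type) (s : seq I) (P : pred I) (f : I -> F) :
  [pchar F].-nat q ->
  trace q k (\sum_(i <- s | P i) f i) = \sum_(i <- s | P i) trace q k (f i).
Proof.
move=> q_pchar; rewrite /trace exchange_big /=; apply: eq_bigr => i _.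
exact/expr_pchar_sum/pchar_natX.
Qed.

Lemma trace_scale q k c x : in_subfield q c ->
  trace q k (c * x) = c * trace q k x.
Proof.
move=> /eqP cq; rewrite /trace mulr_sumr; apply: eq_bigr => i _.
by rewrite exprMn (fixed_exprX _ cq).
Qed.

Lemma trace_in_subfield q k x : [pchar F].-nat q -> #|F| = (q ^ k)%N ->
  in_subfield q (trace q k x).
Proof.
move=> q_pchar cardF; apply/eqP; rewrite /trace expr_pchar_sum //.
case: k cardF => [|k] cardF; first by rewrite !big_ord0.
rewrite big_ord_recr big_ord_recl /= -exprM -expnSr -cardF expf_card addrC.
by congr (_ + _); apply: eq_bigr => i _; rewrite -exprM -expnSr.
Qed.

Lemma trace_conjugate q k a x : [pchar F].-nat q -> #|F| = (q ^ k)%N ->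
  trace q k (x ^+ (q ^ a)%N) = trace q k x.
Proof.
move=> q_pchar cardF; rewrite -trace_expr ?pchar_natX //.
exact/fixed_exprX/eqP/trace_in_subfield.
Qed.

Lemma trace_tower q a b y : [pchar F].-nat q ->
  trace q (a * b)%N y = trace q a (trace (q ^ a)%N b y).
Proof.
move=> q_pchar; rewrite /trace -(big_mkord xpredT (fun t => y ^+ (q ^ t)%N)).
rewrite mulnC big_nat_mul big_mkord.
under [RHS]eq_bigr do rewrite expr_pchar_sum ?pchar_natX //.
rewrite [RHS]exchange_big /=; apply: eq_bigr => s _.
rewrite -{1}(add0n (s * a)%N) big_addn mulSn addnK big_mkord.
by apply: eq_bigr => i _; rewrite -exprM -expnM -expnD addnC mulnC.
Qed.

Lemma exists_nonroot (P : {poly F}) : P != 0 -> (size P <= #|F|)%N ->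
  exists y, ~~ root P y.
Proof.
move=> P_neq0 sizeP; case: (pickP (fun y => ~~ root P y)) => [y Py | noroot].
  by exists y.
have all_roots : all (root P) (enum F) by apply/allP => y _; exact/negbFE/noroot.
by have := max_poly_roots P_neq0 all_roots (enum_uniq F); rewrite -cardE ltnNge sizeP.
Qed.

Lemma exists_trace_neq0 q k : (1 < q)%N -> #|F| = (q ^ k)%N -> exists y, trace q k y != 0.
Proof.
move=> q_gt1 cardF; have k_gt0 : (0 < k)%N.
  by rewrite lt0n; apply: contraTneq (card_finNzRing_gt1 F) => k0; rewrite cardF k0.
pose P : {poly F} := \sum_(i < k) 'X^(q ^ i).
have traceE y : trace q k y = P.[y].
  by rewrite horner_sum; apply: eq_bigr => i _; rewrite hornerXn.
have P_coef1 : P`_1 = 1.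
  rewrite coef_sum (bigD1 (Ordinal k_gt0)) //= coefXn expn0 eqxx big1 ?addr0 // => i.
  by rewrite -val_eqE /= coefXn -(expn0 q) eqn_exp2l // eq_sym => /negPf ->.
have P_neq0 : P != 0.
  by apply/eqP => P0; move: P_coef1; rewrite P0 coef0 => /eqP; rewrite eq_sym oner_eq0.
have sizeP : (size P <= #|F|)%N.
  apply/leq_sizeP => t; rewrite cardF => le_t; rewrite coef_sum big1 // => i _.
  by rewrite coefXn gtn_eqF // (leq_trans _ le_t) // ltn_exp2l.
by have [y Py] := exists_nonroot P_neq0 sizeP; exists y; rewrite traceE.
Qed.

Lemma trace_coprime q a d x : x ^+ (q ^ d)%N = x -> coprime a d ->
  trace (q ^ a)%N d x = trace q d x.
Proof.
case: d => [|d] xqd a_cop_d; first by rewrite /trace !big_ord0.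
pose h (i : 'I_d.+1) : 'I_d.+1 := inord (a * i %% d.+1)%N.
have h_inj : injective h.
  move=> i i' /(congr1 (@nat_of_ord _)); rewrite /h !inordK ?ltn_pmod // => /eqP.
  by rewrite eqn_mod_coprime_mul2l // !modn_small // => /eqP /val_inj.
rewrite /trace [RHS](reindex_inj h_inj); apply: eq_bigr => i _.
by rewrite inordK ?ltn_pmod // -expnM (fixed_expr_modn _ xqd).
Qed.

Lemma exists_subfield_trace_neq0 p N m r j k :
  p \in [pchar F] -> #|F| = (p ^ N)%N -> (m * r)%N = N -> (j * k)%N = N ->
  prime r -> r != p ->
  exists x, in_subfield (p ^ m)%N x /\ trace (p ^ j)%N k x != 0.
Proof.
move=> charFp cardF mrN jkN r_pr r_neq_p; have p_pr := pcharf_prime charFp.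
have pX_gt1 e : (0 < e)%N -> (1 < p ^ e)%N.
  by move=> e_gt0; rewrite -(expn0 p) ltn_exp2l ?prime_gt1.
have N_gt0 : (0 < N)%N.
  by rewrite lt0n; apply: contraTneq (card_finNzRing_gt1 F) => N0; rewrite cardF N0.
have /andP [j_gt0 _] : (0 < j)%N && (0 < k)%N by rewrite -muln_gt0 jkN.
have subfield_trace y : in_subfield (p ^ m)%N (trace (p ^ m)%N r y).
  by apply: trace_in_subfield; rewrite ?pchar_nat_expn // -expnM mrN.
have [/dvdnP [d mE] | j_ndvd_m] := boolP (j %| m)%N.
  have q1_card : #|F| = ((p ^ j) ^ k)%N by rewrite -expnM jkN.
  have [y trace_y_neq0] := exists_trace_neq0 (pX_gt1 j j_gt0) q1_card.
  exists (trace (p ^ m)%N r y); split=> //.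
  rewrite trace_sum ?pchar_nat_expn // (eq_bigr (fun=> trace (p ^ j)%N k y)) => [|s _]; last first.
    by rewrite mE mulnC expnM -expnM trace_conjugate ?pchar_nat_expn.
  rewrite sumr_const card_ord -mulr_natr mulf_neq0 // -(dvdn_pcharf charFp).
  by rewrite dvdn_prime2 // eq_sym.
have [g [jE mE k_cop_r]] := prime_cofactor_split r_pr (etrans jkN (esym mrN)) j_ndvd_m.
have g_gt0 : (0 < g)%N by move: j_gt0; rewrite jE muln_gt0 => /andP [].
have Q_card : #|F| = ((p ^ g) ^ (k * r))%N by rewrite -expnM mulnA -mE mrN.
have [y trace_y_neq0] := exists_trace_neq0 (pX_gt1 g g_gt0) Q_card.
exists (trace (p ^ m)%N r y); split=> //.
have /eqP := subfield_trace y; rewrite jE mE !expnM => x_fixed.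
by rewrite trace_coprime 1?coprime_sym // -trace_tower ?pchar_nat_expn.
Qed.

End FiniteFieldTrace.

Theorem lemma4p3 (F : finFieldType) (n q0 r q1 k : nat) :
  #|F| = (3 ^ (2 * n + 1))%N ->
  (3 ^ (2 * n + 1) = q0 ^ r)%N ->
  prime r -> odd r -> r != 3%N ->
  (3 ^ (2 * n + 1) = q1 ^ k)%N ->
  (exists lambda : F, in_subfield q0 lambda /\
     in_subfield q1 (trace q1 k lambda) /\ trace q1 k lambda != 0) /\
  (exists lambda1 : F, in_subfield q0 lambda1 /\ trace q1 k lambda1 = 1).
Proof.
move=> cardF q0_pow r_pr _ r_neq3 q1_pow.
have charF3 : 3 \in [pchar F] by apply: (card_finPcharP cardF).
have N_gt0 : (0 < 2 * n + 1)%N by rewrite addn1.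
have [m q0E mrN] := pfactor_root (isT : prime 3) N_gt0 q0_pow.
have [j q1E jkN] := pfactor_root (isT : prime 3) N_gt0 q1_pow.
have [x [x_in_q0 trace_x_neq0]] :=
  exists_subfield_trace_neq0 charF3 cardF mrN jkN r_pr r_neq3.
subst q0 q1; set t := trace (3 ^ j)%N k x in trace_x_neq0 *.
have t_in_q1 : in_subfield (3 ^ j)%N t.
  by apply: trace_in_subfield; rewrite ?pchar_nat_expn // -expnM jkN.
have t_in_q0 : in_subfield (3 ^ m)%N t.
  by rewrite /in_subfield trace_expr ?pchar_nat_expn // (eqP x_in_q0).
split; first by exists x.
exists (t^-1 * x); split.
  by rewrite /in_subfield exprMn exprVn (eqP t_in_q0) (eqP x_in_q0).
by rewrite trace_scale ?mulVf // /in_subfield exprVn (eqP t_in_q1).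
Qed.
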